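(* Let $k\geq 2$, let $G$ be a graph with $G\in\mathcal{R}_k$, and let $x\in V(G)$. Let $G'$ be the graph obtained from $G$ by adding a new vertex $y\notin V(G)$ and the edge $(x,y)$. Then $G'\in\mathcal{R}_k$.
   Context: All graphs are finite and simple. For a word $w$ and distinct letters $x,y$ occurring in $w$, $x$ and $y$ alternate in $w$ if deleting all letters other than copies of $x$ and $y$ yields a word of the form $xyxy\cdots$ or $yxyx\cdots$ (of even or odd length). A graph $G=(V,E)$ is word-representable if there is a word $w$ over $V$ (each vertex occurring in $w$) such that for all distinct $x,y\in V$, $x$ and $y$ alternate in $w$ iff $(x,y)\in E$. A word is $k$-uniform if each letter occurs exactly $k$ times; $G$ is $k$-word-representable if some $k$-uniform word represents it. The representation number $\mathcal{R}(G)$ is the least such $k$, and $\mathcal{R}_k$ is the class of word-representable graphs with representation number exactly $k$. *)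

From mathcomp Require Import all_boot.
Set Implicit Arguments. Unset Strict Implicit. Unset Printing Implicit Defensive.

(* A finite simple graph: vertex type T (finType), edge relation e : rel T,
   assumed symmetric and irreflexive in the theorem. *)

Definition alternate (T : eqType) (w : seq T) (x y : T) : bool :=
  sorted (fun a b => a != b) [seq z <- w | (z == x) || (z == y)].

Definition represents (T : finType) (e : rel T) (w : seq T) : Prop :=
  (forall v : T, v \in w) /\
  (forall x y : T, x != y -> (alternate w x y <-> e x y)).

Definition word_representable (T : finType) (e : rel T) : Prop :=
  exists w : seq T, represents e w.

Definition k_uniform (T : finType) (k : nat) (w : seq T) : Prop :=
  forall v : T, count_mem v w = k.

Definition k_word_representable (T : finType) (e : rel T) (k : nat) : Prop :=
  exists w : seq T, k_uniform k w /\ represents e w.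

Definition in_Rk (T : finType) (e : rel T) (k : nat) : Prop :=
  word_representable e /\ k_word_representable e k /\
  (forall j, j < k -> ~ k_word_representable e j).

(* G' : add a new vertex (None) adjacent only to x; old vertices are Some v *)
Definition add_pendant (T : finType) (e : rel T) (x : T) : rel (option T) :=
  fun a b => match a, b with
             | Some u, Some v => e u v
             | None, Some v => v == x
             | Some u, None => u == x
             | None, None => false
             end.

From mathcomp Require Import all_boot.

Set Implicit Arguments.
Unset Strict Implicit.
Unset Printing Implicit Defensive.

(* Given a k-uniform word w representing G, the new vertex y (encoded as None)
   is inserted once on each side of the first occurrence of x, and once
   between any two consecutive later occurrences of x.  Restricted to {x, y}
   the word becomes y x y x ... y x, with exactly 2 + (k - 2) = k copies of y
   (this is where k >= 2 is needed); every other vertex z sees the factor y y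
   around the first x, so it does not alternate with y.  Erasing y from a j-uniform word representing G' conversely gives
   a j-uniform word representing G, so R(G') cannot drop below k. *)

Local Notation distinct_adjacent := (fun a b => a != b).

Lemma sorted_distinct_adjacent_map_Some (T : eqType) (s : seq T) :
  sorted distinct_adjacent (map Some s) = sorted distinct_adjacent s.
Proof. by apply: mono_sorted. Qed.

Lemma alternate_sym (T : eqType) (w : seq T) (a b : T) :
  alternate w a b = alternate w b a.
Proof. by congr sorted; apply: eq_filter => z; apply: orbC. Qed.

Section ErasingNone.
Variable T : eqType.

Lemma filter_Some_pmap (P : pred T) (s : seq (option T)) :
  filter (fun o => if o is Some a then P a else false) s
  = map Some (filter P (pmap id s)).
Proof. by elim: s => [|[a|] s IH] //=; rewrite IH; case: (P a). Qed.

Lemma count_mem_pmap (v : T) (s : seq (option T)) :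
  count_mem v (pmap id s) = count_mem (Some v) s.
Proof. by elim: s => [|[a|] s IH] //=; rewrite IH. Qed.

Lemma alternate_pmap (s : seq (option T)) (u v : T) :
  alternate s (Some u) (Some v) = alternate (pmap id s) u v.
Proof.
rewrite /alternate (eq_filter (a2 := fun o => if o is Some a then (a == u) || (a == v) else false)).
  by rewrite filter_Some_pmap; apply: sorted_distinct_adjacent_map_Some.
by case.
Qed.

End ErasingNone.

Lemma k_uniform_pmap (T : finType) (k : nat) (s : seq (option T)) :
  k_uniform k s -> k_uniform k (pmap id s).
Proof. by move=> sk v; rewrite count_mem_pmap. Qed.

Lemma represents_pmap (T : finType) (e : rel (option T)) (s : seq (option T)) :
  represents e s -> represents (fun u v => e (Some u) (Some v)) (pmap id s).
Proof.
move=> [s_all s_rep]; split=> [v | u v uv]; first by rewrite mem_pmap map_id.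
by rewrite -alternate_pmap; apply: s_rep.
Qed.

Section PendantWord.
Variables (T : eqType) (x : T).

Fixpoint separate_occurrences (s : seq T) : seq (option T) :=
  if s is a :: s' then
    Some a :: (if (a == x) && (x \in s') then None :: separate_occurrences s'
               else separate_occurrences s')
  else [::].

Fixpoint pendant_word (w : seq T) : seq (option T) :=
  if w is a :: w' then
    if a == x then [:: None, Some x, None & separate_occurrences w']
    else Some a :: pendant_word w'
  else [::].

Lemma mem_None_pendant_word (w : seq T) : (None \in pendant_word w) = (x \in w).
Proof.
elim: w => [|a w IH] //=; rewrite in_cons.
by case: (eqVneq a x); rewrite /= ?mem_head // in_cons IH.
Qed.

Lemma pmap_separate_occurrences (s : seq T) : pmap id (separate_occurrences s) = s.
Proof. by elim: s => [|a s IH] //=; case: ifP; rewrite /= IH. Qed.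

Lemma pmap_pendant_word (w : seq T) : pmap id (pendant_word w) = w.
Proof.
elim: w => [|a w IH] //=; case: eqP => [->|_] /=; last by rewrite IH.
by rewrite pmap_separate_occurrences.
Qed.

Lemma count_None_separate_occurrences (s : seq T) :
  count_mem None (separate_occurrences s) = (count_mem x s).-1.
Proof.
elim: s => [|a s IH] //=; rewrite eq_sym.
have [x_s | x_s] := boolP (x \in s); last first.
  have s_0 : count_mem x s = 0 by apply/eqP; rewrite -leqn0 leqNgt -has_count has_pred1.
  by rewrite andbF IH s_0; case: (x == a).
have s_pos : 0 < count_mem x s by rewrite -has_count has_pred1.
by rewrite andbT; case: eqP => _; rewrite /= IH // add1n prednK.
Qed.

Lemma count_None_pendant_word (w : seq T) :
  1 < count_mem x w -> count_mem None (pendant_word w) = count_mem x w.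
Proof.
elim: w => [|a w IH] //=; case: (a == x) => /= cw; last exact: IH.
by rewrite count_None_separate_occurrences add0n !add1n prednK // -ltnS.
Qed.

Let in_None_x (o : option T) := (o == None) || (o == Some x).

Let in_None_x_Some (a : T) : in_None_x (Some a) = (a == x). Proof. by []. Qed.

Lemma filter_separate_occurrences (s : seq T) :
  filter in_None_x (separate_occurrences s)
  = separate_occurrences (filter (pred1 x) s).
Proof.
elim: s => [|a s IH] //=; rewrite in_None_x_Some.
case: eqP => [->|_] /=; last by rewrite IH.
by rewrite mem_filter /= eqxx; case: (x \in s); rewrite /= IH.
Qed.

Lemma filter_pendant_word (w : seq T) :
  filter in_None_x (pendant_word w) = pendant_word (filter (pred1 x) w).
Proof.
elim: w => [|a w IH] //=; case: (eqVneq a x) => [->|a_x] /=.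
  by rewrite in_None_x_Some eqxx filter_separate_occurrences.
by rewrite in_None_x_Some (negbTE a_x).
Qed.

Lemma path_separate_occurrences_nseq (m : nat) :
  path distinct_adjacent None (separate_occurrences (nseq m x)).
Proof.
elim: m => [|m IH] //=; rewrite eqxx mem_nseq eqxx andbT.
by case: m IH => [|m] IH //=; rewrite IH.
Qed.

Lemma sorted_pendant_word_nseq (m : nat) :
  sorted distinct_adjacent (pendant_word (nseq m x)).
Proof. by case: m => [|m] //=; rewrite eqxx /= path_separate_occurrences_nseq. Qed.

Lemma alternate_pendant_word_None_x (w : seq T) :
  alternate (pendant_word w) None (Some x).
Proof.
rewrite /alternate (eq_filter (a2 := in_None_x)) // filter_pendant_word.
by rewrite (all_pred1P _ _ (filter_all _ _)) sorted_pendant_word_nseq.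
Qed.

Lemma not_alternate_pendant_word_None (w : seq T) (z : T) :
  x \in w -> z != x -> ~~ alternate (pendant_word w) None (Some z).
Proof.
rewrite /alternate => + zx; elim: w => [|a w IH] //=.
have Some_eq (b c : T) : (Some b == Some c) = (b == c) by [].
rewrite in_cons; case: (eqVneq a x) => [_ _ | _ /= x_w].
  by rewrite /= Some_eq eq_sym (negbTE zx).
rewrite /= Some_eq.
case: (a == z); last exact: IH.
by apply: contra (IH x_w); apply: path_sorted.
Qed.

End PendantWord.

Lemma k_uniform_pendant_word (T : finType) (k : nat) (x : T) (w : seq T) :
  1 < k -> k_uniform k w -> k_uniform k (pendant_word x w).
Proof.
move=> k_gt1 wk [v|]; first by rewrite -count_mem_pmap pmap_pendant_word.
by rewrite count_None_pendant_word wk.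
Qed.

Lemma represents_pendant_word (T : finType) (e : rel T) (x : T) (w : seq T) :
  represents e w -> represents (add_pendant e x) (pendant_word x w).
Proof.
move=> [w_all w_rep].
have alt_None (z : T) : alternate (pendant_word x w) None (Some z) <-> z == x.
  have [-> | zx] := eqVneq z x; first by split=> // _; apply: alternate_pendant_word_None_x.
  by split=> // alt; have := not_alternate_pendant_word_None (w_all x) zx; rewrite alt.
split=> [[v|] | [u|] [v|] /= uv].
- by have := w_all v; rewrite -{1}(pmap_pendant_word x w) mem_pmap map_id.
- by rewrite mem_None_pendant_word.
- by rewrite alternate_pmap pmap_pendant_word; apply: w_rep.
- by rewrite alternate_sym; apply: alt_None.
- exact: alt_None.
- by case: uv.
Qed.

Theorem proposition6 (T : finType) (e : rel T) (k : nat) (x : T) :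
  symmetric e -> irreflexive e -> 2 <= k -> in_Rk e k ->
  in_Rk (add_pendant e x) k.
Proof.
move=> _ _ k_gt1 [_ [[w [wk w_rep]] k_min]].
have w'k := k_uniform_pendant_word x k_gt1 wk.
have w'_rep := represents_pendant_word x w_rep.
split; first by exists (pendant_word x w).
split; first by exists (pendant_word x w).
move=> j jk [w' [w'j w'_rep']]; apply: (k_min j jk).
by exists (pmap id w'); split; [apply: k_uniform_pmap | apply: represents_pmap w'_rep'].
Qed.
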